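(* Fix $\alpha\in(1/2,1)$. Then for every $n\ge 0$ and every binary rooted tree $T$ on $n$ nodes, the tree $B_n$ defined below contains a subgraph isomorphic to a subdivision of $T$. Equivalently, there is an injective map $f$ from the nodes of $T$ to the nodes of $B_n$ with $f(\mathsf{NCA}(u,v))=\mathsf{NCA}(f(u),f(v))$ for all $u,v$. Definition of $a_N$: for integers $N\ge 0$, $a_0$ is the empty sequence, $a_1=(1)$, and for $N\ge 2$, $a_N=a_{\lfloor N/2\rfloor}\oplus(N)\oplus a_{\lfloor N/2\rfloor}$, where $\oplus$ denotes concatenation. Definition of $B_n$: $B_0$ is the empty tree and $B_1$ is a single node. For $n\ge 2$, let $N=\lfloor(1-\alpha)n\rfloor$ and $a_N=(a(1),\dots,a(k))$. Then $B_n$ consists of a path $u_1-u_2-\dots-u_{k+1}$ rooted at $u_1$, with the following subtrees attached: - for each $i=1,\dots,k$, a copy of $B_{a(i)-1}$ attached to $u_i$; - a copy of $B_{\lfloor\alpha n\rfloor}$ attached to $u_{k+1}$; - a copy of $B_{\lfloor (n-1)/2\rfloor}$ attached to $u_{k+1}$. Attaching a copy of a tree to a node means making its root a child of that node; attaching the empty tree adds nothing.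
   Context: Trees are rooted and unordered, with edges directed from parent to child. A tree is binary if every node has at most two children. $\mathsf{NCA}$ denotes the nearest common ancestor. *)

From mathcomp Require Import all_boot all_order all_algebra.
From mathcomp Require Import reals.
Set Implicit Arguments. Unset Strict Implicit. Unset Printing Implicit Defensive.
Import Order.TTheory GRing.Theory Num.Theory.

(* Rooted binary trees: [BLeaf] is the empty tree, [BNode l r] a node whose
   (at most two) children are the roots of the nonempty trees among l, r.
   Left/right order is immaterial for the statement (every unordered binary
   rooted tree has such a representation). *)
Inductive btree := BLeaf | BNode of btree & btree.

Fixpoint bsize (t : btree) : nat :=
  if t is BNode l r then (bsize l + bsize r).+1 else 0.

(* Nodes are addressed by their path from the root (false = left, true = right). *)
Fixpoint is_node (t : btree) (p : seq bool) : bool :=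
  match t, p with
  | BLeaf, _ => false
  | BNode _ _, [::] => true
  | BNode l r, b :: p' => is_node (if b then r else l) p'
  end.

(* Nearest common ancestor = longest common prefix of addresses. *)
Fixpoint nca (p q : seq bool) : seq bool :=
  match p, q with
  | b :: p', c :: q' => if b == c then b :: nca p' q' else [::]
  | _, _ => [::]
  end.

Fixpoint aseq_aux (fuel N : nat) : seq nat :=
  match fuel with
  | 0 => [::]
  | f.+1 => if N == 0 then [::] else if N == 1 then [:: 1]
            else aseq_aux f N./2 ++ [:: N] ++ aseq_aux f N./2
  end.
Definition aseq (N : nat) : seq nat := aseq_aux N N.

(* The trees B_n (with fuel; fuel n.+1 is enough since all recursive
   arguments are < n). *)
Fixpoint Bfuel (R : realType) (alpha : R) (fuel n : nat) : btree :=
  match fuel with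
  | 0 => BLeaf
  | f.+1 =>
    if n == 0 then BLeaf else if n == 1 then BNode BLeaf BLeaf else
    let N := Num.truncn ((1 - alpha) * n%:R) in
    foldr (fun ai t => BNode (Bfuel alpha f ai.-1) t)
          (BNode (Bfuel alpha f (Num.truncn (alpha * n%:R)))
                 (Bfuel alpha f (n.-1)./2))
          (aseq N)
  end.
Definition B (R : realType) (alpha : R) (n : nat) : btree := Bfuel alpha n.+1 n.

From mathcomp Require Import all_boot all_order all_algebra.
From mathcomp Require Import reals.
From mathcomp Require Import zify ring lra.
Set Implicit Arguments. Unset Strict Implicit. Unset Printing Implicit Defensive.
Import Order.TTheory GRing.Theory Num.Theory.

(* Walk down the heavy path of T (always into the larger
   child) until the heavy subtree has at most K = floor(alpha n) nodes. The
   light subtrees met on the way, of sizes w_i - 1, have total weight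
   sum w_i <= n - K - 1 <= N = floor((1 - alpha) n), and every sequence of
   positive weights of sum at most N is dominated, in order, by a subsequence
   of a_N: split it where its prefix sums cross N/2 and send the crossing
   weight to the middle entry N of a_N. Hence the light subtrees embed in order
   into the copies of B_(a(i)-1) along the path u_1 ... u_k, and what remains
   of T has two children with at most K and floor((n-1)/2) nodes, which embed
   into the two copies attached to u_(k+1). *)

Definition embeds (T U : btree) : Prop :=
  exists f : seq bool -> seq bool,
    [/\ (forall p, is_node T p -> is_node U (f p)),
        {in is_node T &, injective f} &
        (forall p q, is_node T p -> is_node T q ->
           f (nca p q) = nca (f p) (f q))].

Lemma embeds_leaf U : embeds BLeaf U.
Proof. by exists id; split. Qed.

Lemma embeds_node L R UL UR :
  embeds L UL -> embeds R UR -> embeds (BNode L R) (BNode UL UR).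
Proof.
case=> [fL [fL_node fL_inj fL_nca]] [fR [fR_node fR_inj fR_nca]].
pose F (b : bool) := if b then fR else fL.
exists (fun p => if p is b :: p' then b :: F b p' else [::]); split.
- by case=> [|[] p] /=; [|apply: fR_node|apply: fL_node].
- move=> [|b p] [|c q] //; rewrite /in_mem /= => Tp Tq [e_bc]; subst c.
  by case: b Tp Tq => Tp Tq /= e; [rewrite (fR_inj p q) | rewrite (fL_inj p q)].
- by move=> [|[] p] [|[] q] //= Tp Tq; rewrite ?fR_nca ?fL_nca.
Qed.

Lemma embeds_swap L R : embeds (BNode L R) (BNode R L).
Proof.
exists (fun p => if p is b :: p' then ~~ b :: p' else [::]); split.
- by case=> [|[] p].
- by move=> [|b p] [|c q] //; rewrite /in_mem /= => _ _ [/negb_inj -> ->].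
- by move=> [|[] p] [|[] q].
Qed.

Lemma embeds_trans T U V : embeds T U -> embeds U V -> embeds T V.
Proof.
case=> [f [f_node f_inj f_nca]] [g [g_node g_inj g_nca]].
exists (g \o f); split => [p Tp | p q Tp Tq /= /g_inj e | p q Tp Tq /=].
- exact/g_node/f_node.
- by apply: f_inj => //; apply: e; apply: f_node.
- by rewrite f_nca // g_nca //; apply: f_node.
Qed.

Lemma embeds_node_swap L R UL UR :
  embeds L UR -> embeds R UL -> embeds (BNode L R) (BNode UL UR).
Proof. by move=> LUR RUL; apply: embeds_trans (embeds_node LUR RUL) (embeds_swap _ _). Qed.

Lemma embeds_rchild T U X : embeds T U -> embeds T (BNode X U).
Proof.
case=> [f [f_node f_inj f_nca]]; exists (fun p => true :: f p).
by split=> // [p q Tp Tq [/f_inj] | p q Tp Tq /=]; [apply | rewrite f_nca].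
Qed.

Lemma all2_cat (S T : Type) (r : S -> T -> bool) s1 s2 t1 t2 :
  size s1 = size t1 -> all2 r (s1 ++ s2) (t1 ++ t2) = all2 r s1 t1 && all2 r s2 t2.
Proof. by elim: s1 t1 => [|x s1 IH] [|y t1] //= [/IH ->]; rewrite andbA. Qed.

Definition dominated (ws xs : seq nat) : Prop :=
  exists2 s, subseq s xs & all2 leq ws s.

Lemma dominated0 xs : dominated [::] xs.
Proof. by exists [::]; rewrite ?sub0seq. Qed.

Lemma dominated_nilr ws : dominated ws [::] -> ws = [::].
Proof. by case=> s; rewrite subseq0 => /eqP ->; case: ws. Qed.

Lemma dominated_cons w ws x xs :
  w <= x -> dominated ws xs -> dominated (w :: ws) (x :: xs).
Proof. by move=> le_wx [s sub_s dom_s]; exists (x :: s); rewrite /= ?eqxx ?le_wx. Qed.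

Lemma dominated_cat ws1 ws2 xs1 xs2 :
  dominated ws1 xs1 -> dominated ws2 xs2 -> dominated (ws1 ++ ws2) (xs1 ++ xs2).
Proof.
case=> s1 sub1 dom1 [s2 sub2 dom2]; exists (s1 ++ s2); first exact: cat_subseq.
by rewrite all2_cat ?dom1 ?dom2 //; move: dom1; rewrite all2E => /andP[/eqP].
Qed.

Lemma dominated_consP ws x xs : dominated ws (x :: xs) ->
  dominated ws xs \/
  exists w ws', [/\ ws = w :: ws', w <= x & dominated ws' xs].
Proof.
case=> [[|y s]]; first by case: ws => // _ _; left; apply: dominated0.
rewrite /=; case: eqP => [-> sub_s|_ sub_ys dom]; last by left; exists (y :: s).
by case: ws => [|w ws] //= /andP[le_wx dom]; right; exists w, ws; split => //; exists s.
Qed.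

Lemma sumn_split_at_threshold h ws :
  sumn ws <= h \/ exists ws1 w ws2,
    [/\ ws = ws1 ++ w :: ws2, sumn ws1 <= h & h < sumn ws1 + w].
Proof.
elim: ws h => [|x ws IH] h /=; first by left.
case: (leqP x h) => le_xh; last by right; exists [::], x, ws.
case: (IH (h - x)) => [|[ws1 [w [ws2 [-> le_h lt_h]]]]]; first by left; lia.
by right; exists (x :: ws1), w, ws2; split => //=; lia.
Qed.

Lemma aseq_aux_unfold f N : 0 < N ->
  aseq_aux f.+1 N = aseq_aux f N./2 ++ N :: aseq_aux f N./2.
Proof. by case: N => [|[|N]] //= _; case: f. Qed.

Lemma aseq_aux_le f N a : a \in aseq_aux f N -> a <= N.
Proof.
elim: f N => [|f IH] [|[|N]] //=; first by rewrite inE => /eqP ->.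
by rewrite mem_cat inE => /or3P[/IH | /eqP -> | /IH] //; lia.
Qed.

Lemma dominated_aseq_aux f N ws : N <= f -> all (leq 1) ws -> sumn ws <= N ->
  dominated ws (aseq_aux f N).
Proof.
have dominated_sumn0 vs xs : all (leq 1) vs -> sumn vs = 0 -> dominated vs xs.
  by case: vs => [_ _ | v vs /= /andP[v_gt0 _]]; [apply: dominated0 | lia].
elim: f N ws => [|f IH] N ws le_Nf ws_gt0 le_sum.
  by apply: dominated_sumn0 => //; lia.
case: (posnP N) => [N0 | N_gt0].
  by apply: dominated_sumn0 => //; lia.
rewrite aseq_aux_unfold //.
have le_half : N./2 <= f by lia.
case: (sumn_split_at_threshold N./2 ws) => [le_h | [ws1 [w [ws2 [Ews le_h lt_h]]]]].
  by rewrite -[ws]cats0; apply: dominated_cat; [apply: IH | apply: dominated0].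
move: ws_gt0 le_sum; rewrite Ews all_cat sumn_cat /= => /and3P[ws1_gt0 _ ws2_gt0] le_sum.
by apply: dominated_cat; [|apply: dominated_cons]; [apply: IH..|lia|apply: IH]; lia.
Qed.

Fixpoint heavy_weights (K : nat) (T : btree) : seq nat :=
  if T is BNode l r then
    if bsize l <= bsize r then
      if bsize r <= K then [::] else (bsize l).+1 :: heavy_weights K r
    else
      if bsize l <= K then [::] else (bsize r).+1 :: heavy_weights K l
  else [::].

Lemma heavy_weights_gt0 K T : all (leq 1) (heavy_weights K T).
Proof. by elim: T => [|l IHl r IHr] //=; do 2 case: ifP => _ //=. Qed.

Lemma sumn_heavy_weights K T : sumn (heavy_weights K T) <= bsize T - K.+1.
Proof. by elim: T => [|l IHl r IHr] //=; do 2 case: ifP => ? /=; lia. Qed.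

Definition spine (G : nat -> btree) (bottom : btree) (xs : seq nat) : btree :=
  foldr (fun a t => BNode (G a) t) bottom xs.

Lemma embeds_spine G bottom K n xs :
  (forall T, bsize T <= n -> heavy_weights K T = [::] -> embeds T bottom) ->
  (forall a S, a \in xs -> bsize S < a -> embeds S (G a)) ->
  forall T, bsize T <= n -> dominated (heavy_weights K T) xs ->
  embeds T (spine G bottom xs).
Proof.
move=> embeds_bottom; elim: xs => [|x xs IH] embeds_G T le_Tn /=.
  by move/dominated_nilr; apply: embeds_bottom.
have {}IH := IH (fun a S xs_a => embeds_G a S (@mem_behead _ (x :: xs) a xs_a)).
have embeds_Gx S : bsize S < x -> embeds S (G x) by apply: embeds_G; rewrite inE eqxx.
case/dominated_consP => [dom | [w [ws [Ews le_wx dom]]]].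
  exact/embeds_rchild/IH.
move: le_wx dom; case: T le_Tn Ews => [|l r] //= le_Tn.
do 2 case: ifP => ? //; case=> <- <- lt_x dom.
- by apply: embeds_node; [apply: embeds_Gx | apply: IH => //; lia].
- by apply: embeds_node_swap; [apply: IH => //; lia | apply: embeds_Gx].
Qed.

Local Open Scope ring_scope.

Lemma truncn_bounds (R : realType) (alpha : R) (n : nat) :
  0 <= alpha < 1 -> (0 < n)%N ->
  let N := Num.truncn ((1 - alpha) * n%:R) in
  let K := Num.truncn (alpha * n%:R) in
  [/\ (N <= n)%N, (K < n)%N & (n <= N + K + 1)%N].
Proof.
move=> /andP[alpha_ge0 alpha_lt1] n_gt0 N K.
have n_pos : 0 < n%:R :> R by rewrite ltr0n.
split.
- by rewrite truncn_le_nat; nra.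
- by rewrite truncn_lt_nat ?mulr_ge0 ?ler0n // gtr_pMl.
- have N_gt := truncnS_gt ((1 - alpha) * n%:R).
  have K_gt := truncnS_gt (alpha * n%:R).
  rewrite -/N -/K in N_gt K_gt.
  rewrite -ltnS -(ltr_nat R) (_ : (N + K + 1).+1 = N.+1 + K.+1)%N ?natrD; [lra | lia].
Qed.

Lemma Bfuel_unfold (R : realType) (alpha : R) f n : (1 < n)%N ->
  Bfuel alpha f.+1 n =
  spine (fun a => Bfuel alpha f a.-1)
        (BNode (Bfuel alpha f (Num.truncn (alpha * n%:R)))
               (Bfuel alpha f (n.-1)./2))
        (aseq (Num.truncn ((1 - alpha) * n%:R))).
Proof. by case: n => [|[|n]]. Qed.

(* The universality argument only needs [0 <= alpha < 1]; the paper's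
   [alpha > 1/2] is what keeps B_n small. *)
Lemma embeds_Bfuel (R : realType) (alpha : R) : 0 <= alpha < 1 ->
  forall f n T, (n < f)%N -> (bsize T <= n)%N -> embeds T (Bfuel alpha f n).
Proof.
move=> alpha01; elim=> [|f IH] n T // lt_nf le_Tn.
case: (ltnP 1 n) => [n_gt1 | le_n1]; last first.
  case: T le_Tn => [_ | l r]; first exact: embeds_leaf.
  case: n lt_nf le_n1 => [|[|//]] _ _ //=.
  by case: l r => [|? ?] [|? ?] // _; apply: embeds_node; apply: embeds_leaf.
rewrite Bfuel_unfold //.
have [le_Nn lt_Kn le_n_NK] := truncn_bounds alpha01 (ltnW n_gt1).
set K := Num.truncn _ in lt_Kn le_n_NK *; set N := Num.truncn _ in le_Nn le_n_NK *.
apply: (embeds_spine (K := K) (n := n)) => //.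
- case=> [|l r] /= le_lrn; first by move=> _; apply: embeds_leaf.
  do 2 case: ifP => ? //; move=> _;
    [apply: embeds_node_swap | apply: embeds_node];
    apply: IH; rewrite ?leq_half_double; lia.
- by move=> a S /aseq_aux_le le_aN lt_Sa; apply: IH; lia.
- apply: dominated_aseq_aux => //; first exact: heavy_weights_gt0.
  by have := sumn_heavy_weights K T; lia.
Qed.

Theorem lemma2 (R : realType) (alpha : R) :
  2^-1 < alpha < 1 ->
  forall (n : nat) (T : btree), bsize T = n ->
  exists f : seq bool -> seq bool,
    [/\ (forall p, is_node T p -> is_node (B alpha n) (f p)),
        {in is_node T &, injective f} &
        (forall p q, is_node T p -> is_node T q ->
           f (nca p q) = nca (f p) (f q))].
Proof.
case/andP=> half_lt_alpha alpha_lt1 n T size_T.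
have alpha_ge0 : 0 <= alpha by apply: le_trans (ltW half_lt_alpha); rewrite invr_ge0.
by apply: embeds_Bfuel; rewrite ?alpha_ge0 ?size_T.
Qed.
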